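(* Let $D=\{\mathbf{v}_1,\dots,\mathbf{v}_q\}\subset\mathbb{R}^{d}$ with all coordinates in $[-\sqrt{2/d},\sqrt{2/d}]$, let $\eta>0$ with $2/\eta$ an integer, and let $D_Q$ be the randomized quantization of $D$ described in the context. Then for each $i\in[d]$, $\mathbb{E}[w(D_Q,i)]=\sqrt{d/2}\,w(D,i)$, and with probability at least $1-2d\exp(-q/4)$, $\left|\frac1q\sqrt{\tfrac2d}\,w(D_Q,i)-\frac1q w(D,i)\right|\le\eta.$
   Context: $S=\{-1,-1+\eta,\dots,1-\eta,1\}$. For $x\in[-1,1]$ let $k=\lfloor (x+1)/\eta\rfloor$ and let the random quantizer be $Q(x)=-1+k\eta$ with probability $\frac{(k+1)\eta-1-x}{\eta}$ and $Q(x)=-1+(k+1)\eta$ with probability $\frac{x+1-k\eta}{\eta}$, applied independently to each coordinate. $D_Q=\{\tilde v_j=Q(\sqrt{d/2}\,\mathbf{v}_j)\}_{j=1}^q$, $w(D_Q,i)=\sum_{j=1}^q\tilde v_{ji}$ and $w(D,i)=\sum_{j=1}^q v_{ji}$. *)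

From mathcomp Require Import all_boot all_order all_algebra.
From mathcomp Require Import all_classical all_reals.
From mathcomp Require Import sequences exp.
Set Implicit Arguments. Unset Strict Implicit. Unset Printing Implicit Defensive.
Import Order.TTheory GRing.Theory Num.Theory.
Local Open Scope ring_scope.

Section Quant.
Variable R : realType.

Definition scal (d : nat) : R := Num.sqrt (d%:R / 2).

Definition qk (eta x : R) : int := Num.floor ((x + 1) / eta).

Definition qlow (eta x : R) : R := -1 + (qk eta x)%:~R * eta.

(* probability of rounding up to -1 + (k+1) eta *)
Definition pup (eta x : R) : R := (x + 1 - (qk eta x)%:~R * eta) / eta.

Definition qval (eta x : R) (b : bool) : R :=
  if b then qlow eta x + eta else qlow eta x.

Definition pcoin (eta x : R) (b : bool) : R :=
  if b then pup eta x else 1 - pup eta x.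

(* Sample space: one independent coin for every coordinate (j,i). *)
Definition Omega (q d : nat) := {ffun 'I_q * 'I_d -> bool}.

Definition prob_of (q d : nat) (eta : R) (v : 'I_q -> 'I_d -> R)
    (w : Omega q d) : R :=
  \prod_(ji : 'I_q * 'I_d) pcoin eta (scal d * v ji.1 ji.2) (w ji).

(* quantized dataset D_Q entry: tilde v_{j i} = Q(sqrt(d/2) v_{j i}) *)
Definition vQ (q d : nat) (eta : R) (v : 'I_q -> 'I_d -> R)
    (w : Omega q d) (j : 'I_q) (i : 'I_d) : R :=
  qval eta (scal d * v j i) (w (j, i)).

Definition wD (q d : nat) (v : 'I_q -> 'I_d -> R) (i : 'I_d) : R :=
  \sum_(j < q) v j i.
Definition wDQ (q d : nat) (eta : R) (v : 'I_q -> 'I_d -> R)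
    (w : Omega q d) (i : 'I_d) : R :=
  \sum_(j < q) vQ eta v w j i.

Definition Expect (q d : nat) (eta : R) (v : 'I_q -> 'I_d -> R)
    (X : Omega q d -> R) : R :=
  \sum_(w : Omega q d) prob_of eta v w * X w.
Definition Prob (q d : nat) (eta : R) (v : 'I_q -> 'I_d -> R)
    (E : pred (Omega q d)) : R :=
  \sum_(w : Omega q d | E w) prob_of eta v w.

End Quant.

From mathcomp Require Import all_boot all_order all_algebra.
From mathcomp Require Import all_classical all_reals.
From mathcomp Require Import sequences exp convex interval_inference unstable ring lra.
Set Implicit Arguments. Unset Strict Implicit. Unset Printing Implicit Defensive.
Import Order.TTheory GRing.Theory Num.Theory.
Local Open Scope ring_scope.

(* Write e_j = Q(x_j) - x_j for the rounding error of x_j = sqrt(d/2) v_{j i}.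
   The coin of Q is chosen so that E[Q(x)] = x, which gives the expectation
   by linearity, and |e_j| <= eta.  Since sqrt(2/d) w(D_Q, i) - w(D, i) is
   sqrt(2/d) sum_j e_j, the deviation bound is a Chernoff bound for a sum of q
   independent centred variables bounded by eta: convexity of exp gives
   E[exp(m e_j)] <= cosh(m eta), and m eta = 7/8 yields
   P(|sum_j e_j| > q eta / sqrt 2) <= 2 (cosh(7/8) exp(-7/(8 sqrt 2)))^q
   <= 2 exp(-q/4).  For a fixed i the factor d of the statement is slack. *)

Section ProductWeights.
Variables (R : comPzSemiRingType) (I J : finType) (c : I -> J -> R).

Lemma sum_ffun_prodM (f : I -> J -> R) :
  \sum_(w : {ffun I -> J}) (\prod_k c k (w k)) * \prod_k f k (w k) =
  \prod_k \sum_b c k b * f k b.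
Proof. by rewrite bigA_distr_bigA; apply: eq_bigr => w _; rewrite -big_split. Qed.

Hypothesis c_sum1 : forall k, \sum_b c k b = 1.

Lemma sum_ffun_prod1 : \sum_(w : {ffun I -> J}) \prod_k c k (w k) = 1.
Proof.
transitivity (\prod_k \sum_b c k b * 1).
  by rewrite -sum_ffun_prodM; apply: eq_bigr => w _; rewrite big1_eq mulr1.
by apply: big1 => k _; under eq_bigr do rewrite mulr1.
Qed.

Lemma sum_ffun_prod_if (P : pred I) (f : I -> J -> R) :
  \sum_(w : {ffun I -> J}) (\prod_k c k (w k)) * \prod_(k | P k) f k (w k) =
  \prod_(k | P k) \sum_b c k b * f k b.
Proof.
pose fP k b := if P k then f k b else 1.
have -> : \prod_(k | P k) \sum_b c k b * f k b = \prod_k \sum_b c k b * fP k b.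
  rewrite big_mkcond; apply: eq_bigr => k _; rewrite /fP.
  by case: (P k) => //; under eq_bigr do rewrite mulr1.
by rewrite -sum_ffun_prodM; apply: eq_bigr => w _; rewrite [X in _ * X]big_mkcond.
Qed.

Lemma sum_ffun_prod_at (k0 : I) (g : J -> R) :
  \sum_(w : {ffun I -> J}) (\prod_k c k (w k)) * g (w k0) = \sum_b c k0 b * g b.
Proof.
have := sum_ffun_prod_if (fun k => k == k0) (fun _ => g).
by rewrite big_pred1_eq; under eq_bigr do rewrite big_pred1_eq.
Qed.

End ProductWeights.

Lemma big_pair_snd (R : Type) (idx : R) (op : Monoid.com_law idx) (I J : finType)
    (j : J) (F : I * J -> R) :
  \big[op/idx]_(k | k.2 == j) F k = \big[op/idx]_i F (i, j).
Proof.
transitivity (\big[op/idx]_i \big[op/idx]_(j' | j' == j) F (i, j')).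
  by rewrite pair_big_dep; apply: eq_big => [[a b]|[a b]].
by apply: eq_bigr => i _; rewrite big_pred1_eq.
Qed.

Section Rounding.
Variables (R : realType) (eta : R).
Hypothesis eta_gt0 : 0 < eta.

Lemma pupE x : pup eta x = (x + 1) / eta - (qk eta x)%:~R.
Proof. by rewrite /pup; field; rewrite gt_eqF. Qed.

Lemma pup_ge0 x : 0 <= pup eta x.
Proof. by rewrite pupE subr_ge0 floor_le. Qed.

Lemma pup_lt1 x : pup eta x < 1.
Proof. by rewrite pupE ltrBlDr [X in _ < X]addrC -intrD1 floorD1_gt. Qed.

Lemma qlow_pup x : qlow eta x + eta * pup eta x = x.
Proof. by rewrite /qlow pupE; field; rewrite gt_eqF. Qed.

Lemma pcoin_ge0 x b : 0 <= pcoin eta x b.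
Proof. by case: b; rewrite /= ?subr_ge0 ?pup_ge0 // ltW // pup_lt1. Qed.

Lemma pcoin_sum1 x : \sum_b pcoin eta x b = 1.
Proof. by rewrite big_bool /= addrC subrK. Qed.

Lemma pcoin_mean_dev x : \sum_b pcoin eta x b * (qval eta x b - x) = 0.
Proof.
rewrite big_bool /pcoin /qval /=.
by have := qlow_pup x; move: (qlow _ _) (pup _ _) => l p <-; ring.
Qed.

Lemma pcoin_mean x : \sum_b pcoin eta x b * qval eta x b = x.
Proof.
have := pcoin_mean_dev x; under eq_bigr do rewrite mulrBr.
by rewrite sumrB -mulr_suml pcoin_sum1 mul1r => /eqP; rewrite subr_eq0 => /eqP.
Qed.

Lemma qval_dev_le x b : `|qval eta x b - x| <= eta.
Proof.
have ep_ge0 : 0 <= eta * pup eta x by rewrite mulr_ge0 ?pup_ge0 // ltW.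
have ep_le : eta * pup eta x <= eta by rewrite ler_piMr ?ltW ?pup_lt1.
rewrite /qval ler_norml; have := qlow_pup x.
by move: (qlow _ _) (pup _ _) ep_ge0 ep_le => l p ? ? <-; case: b; apply/andP; split; lra.
Qed.

End Rounding.

Definition cosh (R : realType) (x : R) : R := (expR x + expR (- x)) / 2.

Lemma coshN (R : realType) (x : R) : cosh (- x) = cosh x.
Proof. by rewrite /cosh opprK addrC. Qed.

Lemma expR_le_chord (R : realType) (m y : R) : `|y| <= 1 ->
  expR (m * y) <= (1 + y) / 2 * expR m + (1 - y) / 2 * expR (- m).
Proof.
rewrite ler_norml => /andP[y_ge y_le].
have t_ge0 : 0 <= (1 + y) / 2 by lra.
have t_le1 : (1 + y) / 2 <= 1 by lra.
have := convex_expR (Itv01 t_ge0 t_le1) m (- m); rewrite !convRE /= /onem.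
have -> : 1 - (1 + y) / 2 = (1 - y) / 2 by field.
by have -> : (1 + y) / 2 * m + (1 - y) / 2 * - m = m * y by field.
Qed.

Lemma mgf_le_cosh (R : realType) (J : finType) (p y : J -> R) (a m : R) :
  0 < a -> (forall b, 0 <= p b) -> \sum_b p b = 1 -> \sum_b p b * y b = 0 ->
  (forall b, `|y b| <= a) -> \sum_b p b * expR (m * y b) <= cosh (m * a).
Proof.
move=> a_gt0 p_ge0 p_sum1 py0 y_le.
pose chord b := (1 + y b / a) / 2 * expR (m * a) + (1 - y b / a) / 2 * expR (- (m * a)).
apply: (@le_trans _ _ (\sum_b p b * chord b)).
  apply: ler_sum => b _; apply: ler_wpM2l => //.
  have -> : m * y b = (m * a) * (y b / a) by field; rewrite gt_eqF.
  apply: expR_le_chord.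
  by rewrite normrM [`|a^-1|]gtr0_norm ?invr_gt0 // ler_pdivrMr // mul1r.
have -> : \sum_b p b * chord b = (\sum_b p b) * cosh (m * a) +
    (\sum_b p b * y b) / a * ((expR (m * a) - expR (- (m * a))) / 2).
  rewrite !mulr_suml -big_split /=; apply: eq_bigr => b _.
  by rewrite /chord /cosh; field; rewrite gt_eqF.
by rewrite p_sum1 py0 !mul0r addr0 mul1r.
Qed.

Lemma expR_le_invB (R : realType) (x : R) : x < 1 -> expR x <= (1 - x)^-1.
Proof.
move=> x_lt1; rewrite -[expR x]invrK -expRN lef_pV2 ?posrE ?expR_gt0 ?subr_gt0 //.
exact: expR_ge1Dx.
Qed.

(* 7/8 is a rational stand-in for the optimal m eta = 1/sqrt 2. *)
Lemma cosh_7_8_le (R : realType) :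
  cosh (7 / 8 : R) <= expR (7 / 8 / Num.sqrt 2 - 1 / 4).
Proof.
have sqrt2_le : Num.sqrt (2 : R) <= 99 / 70.
  have : Num.sqrt (2 : R) <= Num.sqrt ((99 / 70) ^+ 2) by rewrite ler_sqrt; lra.
  by rewrite sqrtr_sqr ger0_norm.
have lower : (2023 / 2000) ^+ 32 <= expR (7 / 8 / Num.sqrt 2 - 1 / 4 : R).
  apply: (@le_trans _ _ (expR (23 / 2000 * 32%:R))).
    rewrite expRM_natr; apply: lerXn2r.
    - by rewrite nnegrE; lra.
    - by rewrite nnegrE expR_ge0.
    - by have := expR_ge1Dx (23 / 2000 : R); lra.
  rewrite ler_expR; suff : 309 / 500 <= 7 / 8 / Num.sqrt (2 : R) by lra.
  by rewrite ler_pdivlMr ?sqrtr_gt0; lra.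
have upper : cosh (7 / 8 : R) <= ((256 / 249) ^+ 32 + (256 / 263) ^+ 32) / 2.
  have -> : (7 / 8 : R) = 7 / 256 * 32%:R by field.
  rewrite /cosh ler_pM2r; last lra.
  rewrite -mulNr !expRM_natr; apply: lerD; apply: lerXn2r.
  - by rewrite nnegrE expR_ge0.
  - by rewrite nnegrE; lra.
  - apply: le_trans (expR_le_invB _) _; first lra.
    by rewrite (_ : 1 - 7 / 256 = (256 / 249)^-1) ?invrK // invf_div; lra.
  - by rewrite nnegrE expR_ge0.
  - by rewrite nnegrE; lra.
  - apply: le_trans (expR_le_invB _) _; first lra.
    by rewrite (_ : 1 - - (7 / 256) = (256 / 263)^-1) ?invrK // invf_div; lra.
apply: le_trans upper (le_trans _ lower); clear; lra.
Qed.

Section Quantization.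
Variables (R : realType) (q d : nat) (v : 'I_q -> 'I_d -> R) (eta : R).
Hypothesis eta_gt0 : 0 < eta.

Lemma prob_of_ge0 (w : Omega q d) : 0 <= prob_of eta v w.
Proof. by apply: prodr_ge0 => k _; exact: pcoin_ge0. Qed.

Lemma sum_prob_of : \sum_(w : Omega q d) prob_of eta v w = 1.
Proof.
exact: (sum_ffun_prod1 (c := fun k => pcoin eta (scal R d * v k.1 k.2))
          (fun k => pcoin_sum1 _ _)).
Qed.

Lemma Prob_predC (E : pred (Omega q d)) :
  Prob eta v E = 1 - Prob eta v (fun w => ~~ E w).
Proof. by rewrite /Prob -sum_prob_of [X in X - _](bigID E) /= addrK. Qed.

Lemma le_Prob (E1 E2 : pred (Omega q d)) :
  (forall w, E1 w -> E2 w) -> Prob eta v E1 <= Prob eta v E2.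
Proof.
move=> sub12; rewrite /Prob [X in _ <= X](bigID E1) /=.
have -> : \sum_(w | E1 w) prob_of eta v w = \sum_(w | E2 w && E1 w) prob_of eta v w.
  by apply: eq_bigl => w; case E1w: (E1 w); rewrite ?andbT ?andbF // sub12.
by rewrite lerDl sumr_ge0 // => w _; exact: prob_of_ge0.
Qed.

Lemma ExpectD (X Y : Omega q d -> R) :
  Expect eta v (fun w => X w + Y w) = Expect eta v X + Expect eta v Y.
Proof. by rewrite /Expect -big_split; apply: eq_bigr => w _; rewrite mulrDr. Qed.

Lemma ExpectZl (a : R) (X : Omega q d -> R) :
  Expect eta v (fun w => a * X w) = a * Expect eta v X.
Proof. by rewrite /Expect mulr_sumr; apply: eq_bigr => w _; rewrite mulrCA. Qed.

Lemma Expect_sum (I : finType) (X : I -> Omega q d -> R) :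
  Expect eta v (fun w => \sum_j X j w) = \sum_j Expect eta v (X j).
Proof. by rewrite /Expect; under eq_bigr do rewrite mulr_sumr; exact: exchange_big. Qed.

Lemma Expect_coin (j : 'I_q) (i : 'I_d) (g : bool -> R) :
  Expect eta v (fun w => g (w (j, i))) =
  \sum_b pcoin eta (scal R d * v j i) b * g b.
Proof.
exact: (@sum_ffun_prod_at _ _ _ (fun k => pcoin eta (scal R d * v k.1 k.2))
          (fun k => pcoin_sum1 _ _) (j, i) g).
Qed.

Lemma Expect_wDQ i : Expect eta v (fun w => wDQ eta v w i) = scal R d * wD v i.
Proof.
rewrite /wDQ Expect_sum /wD mulr_sumr; apply: eq_bigr => j _.
by rewrite /vQ Expect_coin pcoin_mean.
Qed.

Lemma Prob_le_Expect (E : pred (Omega q d)) (Z : Omega q d -> R) :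
  (forall w, 0 <= Z w) -> (forall w, E w -> 1 <= Z w) ->
  Prob eta v E <= Expect eta v Z.
Proof.
move=> Z_ge0 Z_ge1; rewrite /Prob /Expect [X in _ <= X](bigID E) /=.
rewrite -[X in X <= _]addr0; apply: lerD.
  by apply: ler_sum => w Ew; rewrite -[X in X <= _]mulr1 ler_wpM2l ?prob_of_ge0 ?Z_ge1.
by apply: sumr_ge0 => w _; rewrite mulr_ge0 ?prob_of_ge0.
Qed.

Lemma Prob_abs_gt_le (S : Omega q d -> R) (lam t : R) : 0 < lam ->
  Prob eta v (fun w => t < `|S w|) <=
  expR (- (lam * t)) * (Expect eta v (fun w => expR (lam * S w)) +
                        Expect eta v (fun w => expR (- lam * S w))).
Proof.
move=> lam_gt0; rewrite -ExpectD -ExpectZl; apply: Prob_le_Expect => w.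
  by rewrite mulr_ge0 ?addr_ge0 ?expR_ge0.
rewrite mulrDr -!expRD ltr_normr => /orP[] t_lt.
- have pos : 0 < lam * (S w - t) by rewrite mulr_gt0 // subr_gt0.
  have := expR_ge1Dx (- (lam * t) + lam * S w).
  have := expR_ge0 (- (lam * t) + - lam * S w); lra.
- have pos : 0 < lam * (- S w - t) by rewrite mulr_gt0 // subr_gt0.
  have := expR_ge1Dx (- (lam * t) + - lam * S w).
  have := expR_ge0 (- (lam * t) + lam * S w); lra.
Qed.

Definition round_err (i : 'I_d) (w : Omega q d) : R :=
  \sum_j (vQ eta v w j i - scal R d * v j i).

Lemma Expect_expR_round_err_le i m :
  Expect eta v (fun w => expR (m * round_err i w)) <= cosh (m * eta) ^+ q.
Proof.
pose c k := pcoin eta (scal R d * v k.1 k.2).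
pose h j b := expR (m * (qval eta (scal R d * v j i) b - scal R d * v j i)).
have -> : Expect eta v (fun w => expR (m * round_err i w)) =
          \prod_j \sum_b c (j, i) b * h j b.
  rewrite -(big_pair_snd _ i (fun k => \sum_b c k b * h k.1 b)).
  rewrite -(sum_ffun_prod_if (c := c)) => [|k]; last exact: pcoin_sum1.
  apply: eq_bigr => w _; congr (_ * _).
  by rewrite /round_err mulr_sumr expR_sum (big_pair_snd _ i (fun k => h k.1 (w k))).
have -> : cosh (m * eta) ^+ q = \prod_(j < q) cosh (m * eta).
  by rewrite prodr_const card_ord.
apply: ler_prod => j _; apply/andP; split.
  by apply: sumr_ge0 => b _; rewrite mulr_ge0 ?pcoin_ge0 ?expR_ge0.
apply: mgf_le_cosh => //.
- exact: pcoin_ge0.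
- exact: pcoin_sum1.
- exact: pcoin_mean_dev.
- exact: qval_dev_le.
Qed.

Lemma Prob_round_err_gt i :
  Prob eta v (fun w => q%:R * eta / Num.sqrt 2 < `|round_err i w|) <=
  2 * expR (- (q%:R / 4)).
Proof.
have sqrt2_gt0 : 0 < Num.sqrt (2 : R) by rewrite sqrtr_gt0 ltr0n.
have lam_gt0 : 0 < 7 / 8 / eta by rewrite divr_gt0.
have lam_eta : 7 / 8 / eta * eta = 7 / 8 by rewrite divfK ?gt_eqF.
have cosh_pow : cosh (7 / 8) ^+ q <= expR (q%:R * (7 / 8 / Num.sqrt 2 - 1 / 4) : R).
  rewrite expRM_natl; apply: lerXn2r.
  - by rewrite nnegrE /cosh divr_ge0 ?addr_ge0 ?expR_ge0.
  - by rewrite nnegrE expR_ge0.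
  - exact: cosh_7_8_le.
have mgf_pos := Expect_expR_round_err_le i (7 / 8 / eta).
have mgf_neg := Expect_expR_round_err_le i (- (7 / 8 / eta)).
rewrite lam_eta in mgf_pos; rewrite mulNr lam_eta coshN in mgf_neg.
apply: le_trans (Prob_abs_gt_le _ _ lam_gt0) _.
apply: le_trans (ler_wpM2l (expR_ge0 _)
  (lerD (le_trans mgf_pos cosh_pow) (le_trans mgf_neg cosh_pow))) _.
have -> : forall a b : R, a * (b + b) = 2 * (a * b) by move=> a b; ring.
rewrite -expRD; suff -> : - (7 / 8 / eta * (q%:R * eta / Num.sqrt 2)) +
                          q%:R * (7 / 8 / Num.sqrt 2 - 1 / 4) = - (q%:R / 4) by [].
by field; rewrite !gt_eqF.
Qed.

Lemma deviation_le i w : (0 < d)%N ->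
  `|round_err i w| <= q%:R * eta / Num.sqrt 2 ->
  `|(q%:R)^-1 * Num.sqrt (2 / d%:R) * wDQ eta v w i - (q%:R)^-1 * wD v i| <= eta.
Proof.
move=> d_gt0 err_le.
have d_ge1 : (1 : R) <= d%:R by rewrite ler1n.
have sqrt2_gt0 : 0 < Num.sqrt (2 : R) by rewrite sqrtr_gt0 ltr0n.
have sqrt_scal : Num.sqrt (2 / d%:R) * scal R d = 1.
  rewrite /scal -sqrtrM ?divr_ge0 //.
  have -> : 2 / d%:R * (d%:R / 2) = 1 :> R by field; rewrite pnatr_eq0 -lt0n.
  exact: sqrtr1.
have sqrt_le : Num.sqrt (2 / d%:R) <= Num.sqrt (2 : R).
  by rewrite ler_sqrt ?ler_pdivrMr; lra.
have -> : (q%:R)^-1 * Num.sqrt (2 / d%:R) * wDQ eta v w i - (q%:R)^-1 * wD v i =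
          (q%:R)^-1 * Num.sqrt (2 / d%:R) * round_err i w.
  have sqrt_sum : Num.sqrt (2 / d%:R) * \sum_j scal R d * v j i = wD v i.
    by rewrite mulr_sumr; apply: eq_bigr => j _; rewrite mulrA sqrt_scal mul1r.
  by rewrite /round_err /wDQ sumrB -sqrt_sum; ring.
have [->|q_gt0] := posnP q; first by rewrite invr0 !mul0r normr0 ltW.
rewrite normrM ger0_norm ?mulr_ge0 ?invr_ge0 ?sqrtr_ge0 //.
have bound_eq : (q%:R)^-1 * Num.sqrt 2 * (q%:R * eta / Num.sqrt 2) = eta.
  by field; rewrite !gt_eqF ?ltr0n.
rewrite -[X in _ <= X]bound_eq.
by rewrite ler_pM ?mulr_ge0 ?invr_ge0 ?sqrtr_ge0 ?ler_wpM2l ?invr_ge0.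
Qed.

End Quantization.

Theorem lemma2 (R : realType) (q d : nat) (v : 'I_q -> 'I_d -> R) (eta : R)
  (hv : forall j i, `|v j i| <= Num.sqrt (2 / d%:R))
  (heta : 0 < eta) (hint : exists m : nat, 2 / eta = m%:R) :
  forall i : 'I_d,
    Expect eta v (fun w => wDQ eta v w i) = scal R d * wD v i /\
    Prob eta v (fun w => `| (q%:R)^-1 * Num.sqrt (2 / d%:R) * wDQ eta v w i
                            - (q%:R)^-1 * wD v i | <= eta)
      >= 1 - 2 * d%:R * expR (- (q%:R / 4)).
Proof.
move=> i; have d_gt0 : (0 < d)%N by apply: leq_ltn_trans (ltn_ord i).
split; first exact: Expect_wDQ.
set t := q%:R * eta / Num.sqrt 2.
apply: (@le_trans _ _ (Prob eta v (fun w => `|round_err v eta i w| <= t))); last first.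
  by apply: (le_Prob _ heta) => w; exact: deviation_le heta _ _ d_gt0.
have tail : Prob eta v (fun w => ~~ (`|round_err v eta i w| <= t)) <=
            2 * expR (- (q%:R / 4)).
  apply: le_trans (Prob_round_err_gt v heta i).
  by apply: (le_Prob _ heta) => w; rewrite -ltNge.
have d_ge1 : 2 * expR (- (q%:R / 4)) <= 2 * d%:R * expR (- (q%:R / 4)) :> R.
  by rewrite ler_pM2r ?expR_gt0 // ler_peMr // ler1n.
rewrite Prob_predC; lra.
Qed.
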